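(* There is a universal constant $C>0$ such that for every positive integer $T$, every $x \in \{0,1\}^T$ and every $p \in [0,1]^T$: (1) $\mathsf{CalDist}(x,p) \le \mathsf{LowerCalDist}(x,p) + C\sqrt{T}$; (2) $\mathsf{CalDist}(x,p) \le C\cdot \mathsf{LowerCalDist}(x,p) + C\, m$, where $m = |\{p_1, p_2, \ldots, p_T\}|$ is the number of distinct entries of $p$.
   Context: For $x \in \{0,1\}^T$, let $\mathcal{C}(x) = \{q \in [0,1]^T : \sum_{t=1}^T (x_t - q_t)\mathbf{1}[q_t = \alpha] = 0 \text{ for all } \alpha \in [0,1]\}$ (predictions perfectly calibrated for $x$). The calibration distance is $\mathsf{CalDist}(x,p) = \min_{q \in \mathcal{C}(x)} \|p-q\|_1$. Let $\underline{\mathcal{C}}(x)$ be the set of $T$-tuples $\mathcal{D} = (\mathcal{D}_1,\ldots,\mathcal{D}_T)$ of probability distributions, each with finite support contained in $[0,1]$, such that $\sum_{t=1}^T (x_t - \alpha)\mathcal{D}_t(\alpha) = 0$ for every $\alpha \in [0,1]$. For such $\mathcal{D}$ write $\|p - \mathcal{D}\|_1 = \sum_{t=1}^T \mathbb{E}_{q_t \sim \mathcal{D}_t}|p_t - q_t|$. The lower calibration distance is $\mathsf{LowerCalDist}(x,p) = \inf_{\mathcal{D} \in \underline{\mathcal{C}}(x)} \|p - \mathcal{D}\|_1$. *)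

From HB Require Import structures.
From mathcomp Require Import all_boot all_order all_algebra.
From mathcomp Require Import all_classical all_reals.
From mathcomp Require Import Rstruct.
From Stdlib Require Import Rdefinitions.
Set Implicit Arguments. Unset Strict Implicit. Unset Printing Implicit Defensive.
Import Order.TTheory GRing.Theory Num.Theory.
Local Open Scope ring_scope.
Local Open Scope classical_set_scope.

(* outcomes x in {0,1}^T are bool-valued; x_t is read as (x t)%:R *)

Definition perfectly_calibrated (T : nat) (x : 'I_T -> bool) (q : 'I_T -> R) : Prop :=
  (forall t, 0 <= q t <= 1) /\
  forall alpha : R, \sum_(t < T) ((x t)%:R - q t) * (q t == alpha)%:R = 0.

Definition l1dist (T : nat) (p q : 'I_T -> R) : R := \sum_(t < T) `|p t - q t|.

(* CalDist(x,p) = min_{q in C(x)} ||p - q||_1, written as the infimum (attained) *)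
Definition CalDist (T : nat) (x : 'I_T -> bool) (p : 'I_T -> R) : R :=
  inf [set c : R | exists q : 'I_T -> R, perfectly_calibrated x q /\ c = l1dist p q].

Definition finite_dist_on (d : R -> R) (s : seq R) : Prop :=
  [/\ uniq s, (forall a, a \in s -> 0 <= a <= 1),
      (forall a, 0 <= d a), (forall a, d a != 0 -> a \in s)
    & \sum_(a <- s) d a = 1].

Definition lower_calibrated (T : nat) (x : 'I_T -> bool)
    (D : 'I_T -> R -> R) (S : 'I_T -> seq R) : Prop :=
  (forall t, finite_dist_on (D t) (S t)) /\
  forall alpha : R, \sum_(t < T) ((x t)%:R - alpha) * D t alpha = 0.

Definition l1dist_dist (T : nat) (p : 'I_T -> R) (D : 'I_T -> R -> R)
    (S : 'I_T -> seq R) : R :=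
  \sum_(t < T) \sum_(a <- S t) D t a * `|p t - a|.

Definition LowerCalDist (T : nat) (x : 'I_T -> bool) (p : 'I_T -> R) : R :=
  inf [set c : R | exists (D : 'I_T -> R -> R) (S : 'I_T -> seq R),
          lower_calibrated x D S /\ c = l1dist_dist p D S].

Definition num_distinct (T : nat) (p : 'I_T -> R) : nat :=
  size (undup [seq p t | t <- enum 'I_T]).

From HB Require Import structures.
From mathcomp Require Import all_boot all_order all_algebra.
From mathcomp Require Import all_classical all_reals.
From mathcomp Require Import Rstruct.
From Stdlib Require Import Rdefinitions.
From mathcomp Require Import lra zify.
Import Order.TTheory GRing.Theory Num.Theory.
Local Open Scope ring_scope.
Set Implicit Arguments. Unset Strict Implicit. Unset Printing Implicit Defensive.

(* Fix a lower-calibrated D and a grid v_0 <= ... <= v_M in [0, 1]; round every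
   forecast p_t to a grid index jp t and every support point a of D to an index ja a.
   In each outcome class the mass that D sends to indices <= l is rounded to an
   integer quota, and the rounds of the class, ordered by jp, fill the bins 0..M
   from the bottom so that exactly that quota lands in bins <= l.  Forecasting in
   each bin its frequency of ones is perfectly calibrated.  Both assignments are
   monotone, so by the layer-cake formula moving each round from v (jp t) to its bin
   costs at most the transport cost of D plus a rounding error of 1 per cut l,
   weighted by v_(l+1) - v_l; and the calibration of D puts each bin frequency within
   3 plus D's rounding cost of the bin value.  So CalDist <= cost D + rounding costs
   + 3M + 4.  A uniform grid of mesh about 1/sqrt T gives (1); the grid of the
   distinct values of p, with nearest-point rounding of the supports, gives (2). *)

Lemma natr_bool_dist (R : numDomainType) (b c : bool) :
  `|b%:R - c%:R| = (b != c)%:R :> R.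
Proof.
by case: b; case: c; rewrite /= ?(subrr, subr0, sub0r, normrN, normr0, normr1).
Qed.

Lemma eqn_indicator (R : pzRingType) (k j : nat) :
  (k == j)%:R = (k <= j)%nat%:R - (k < j)%nat%:R :> R.
Proof. by case: (ltngtP k j); rewrite ?subrr ?subr0. Qed.

Lemma sum_indicator (R : pzSemiRingType) (I : finType) (P Q : pred I) :
  \sum_(t | P t) (Q t)%:R = #|[set t | P t && Q t]|%:R :> R.
Proof.
by rewrite -sum1dep_card natr_sum big_mkcondr; apply: eq_bigr => t _; case: (Q t).
Qed.

Lemma sum_bool_split (R : nmodType) (I : finType) (f : I -> bool) (F : I -> R) :
  \sum_t F t = \sum_(t | f t == true) F t + \sum_(t | f t == false) F t.
Proof. by rewrite (bigID f) /=; congr (_ + _); apply: eq_bigl => t; case: (f t). Qed.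

Lemma sum_nat_bool_le n (f : nat -> bool) : (\sum_(0 <= j < n) f j <= n)%nat.
Proof.
apply: (@leq_trans (\sum_(0 <= j < n) 1)%nat).
  by apply: leq_sum => j _; case: (f j).
by rewrite sum_nat_const_nat muln1 subn0.
Qed.

Lemma sum_ord_indicator (R : pzSemiRingType) (M k : nat) (F : nat -> R) :
  (k <= M)%nat -> \sum_(j < M.+1) (k == j)%:R * F j = F k.
Proof.
move=> kM; rewrite (bigD1 (Ordinal (kM : k < M.+1)%nat)) //= eqxx mul1r big1 ?addr0 //.
by move=> j; rewrite -val_eqE /= eq_sym => /negbTE ->; rewrite mul0r.
Qed.

Lemma sum_uniq_support (R : nmodType) (T : eqType) (s s' : seq T) (f : T -> R) :
  uniq s -> uniq s' -> {subset s <= s'} -> (forall a, f a != 0 -> a \in s) ->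
  \sum_(a <- s) f a = \sum_(a <- s') f a.
Proof.
move=> us us' ss' fs; rewrite [RHS](bigID (mem s)) /= [X in _ = _ + X]big1 ?addr0.
  rewrite -[in RHS]big_filter; apply: perm_big; apply: uniq_perm; rewrite ?filter_uniq //.
  by move=> a; rewrite mem_filter; case: (boolP (a \in s)) => // /ss' ->.
by move=> a /negP sa; apply/eqP/negPn/negP => /fs.
Qed.

Section LayerCake.
Variables (R : realDomainType) (M : nat) (v : nat -> R).

Lemma telescope_from i : (i <= M)%nat ->
  \sum_(l < M) (v l.+1 - v l) * (i <= l)%nat%:R = v M - v i.
Proof.
move=> iM; rewrite -(big_mkord xpredT (fun l => (v l.+1 - v l) * (i <= l)%nat%:R)).
rewrite (big_cat_nat (leq0n i) iM) /= big_nat_cond big1 ?add0r; last first.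
  by move=> l /andP[/andP[_ li] _]; rewrite leqNgt li mulr0.
rewrite big_nat_cond (eq_bigr (fun l => v l.+1 - v l)) -?big_nat_cond ?telescope_sumr //.
by move=> l /andP[/andP[il _] _]; rewrite il mulr1.
Qed.

Hypothesis v_mono : forall l, (l < M)%nat -> v l <= v l.+1.

Lemma dist_layer_cake i j : (i <= M)%nat -> (j <= M)%nat ->
  `|v i - v j| = \sum_(l < M) (v l.+1 - v l) * ((i <= l)%nat != (j <= l)%nat)%:R.
Proof.
wlog ij : i j / (i <= j)%nat.
  move=> wl iM jM; case: (leqP i j) => [ij | /ltnW ji]; first exact: wl.
  by rewrite distrC wl //; apply: eq_bigr => l _; rewrite eq_sym.
move=> iM jM.
have gap : \sum_(l < M) (v l.+1 - v l) * ((i <= l)%nat != (j <= l)%nat)%:R = v j - v i.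
  rewrite (_ : v j - v i = (v M - v i) - (v M - v j)); last by lra.
  rewrite -!telescope_from // -sumrB; apply: eq_bigr => l _; rewrite -mulrBr.
  by case: (leqP j l) => [/(leq_trans ij) -> | _]; case: (i <= l)%nat; rewrite ?subrr ?subr0.
rewrite gap ler0_norm ?opprB // subr_le0 -subr_ge0 -gap.
by apply: sumr_ge0 => l _; rewrite mulr_ge0 // subr_ge0 v_mono.
Qed.

End LayerCake.

Section Rank.
Variables (I : finType) (P : pred I) (key : I -> nat).

Definition rank_in (t : I) : nat := #|[set s | P s && (key s <= key t)%nat]|.

Lemma rank_in_le_card t : (rank_in t <= #|P|)%nat.
Proof. by apply/subset_leq_card/fintype.subsetP => s; rewrite !inE => /andP[]. Qed.

Hypothesis key_inj : injective key.

Lemma card_rank_in_le k : (k <= #|P|)%nat ->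
  #|[set t | P t && (rank_in t <= k)%nat]| = k.
Proof.
move=> kP; set Q := [set t | P t && (rank_in t <= k)%nat].
have le_k : (#|Q| <= k)%nat.
  have [->|[t0 t0Q]] := set_0Vmem Q; first by rewrite cards0.
  have [tm tmQ tm_max] := arg_maxnP key t0Q.
  apply: leq_trans (_ : rank_in tm <= k)%nat.
    apply/subset_leq_card/fintype.subsetP => s sQ.
    by move: (sQ) (tm_max s sQ); rewrite !inE => /andP[-> _].
  by move: (tmQ : tm \in Q); rewrite !inE => /andP[].
(* The key-minimal u in P outside Q has rank > k, yet every other s in P with
   key s <= key u lies in Q. *)
have ge_k : (k <= #|Q|)%nat.
  set B := [set t | P t && ~~ (rank_in t <= k)%nat].
  have [B0|[u0 u0B]] := set_0Vmem B.
    apply: leq_trans kP (subset_leq_card _); apply/fintype.subsetP => t Pt.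
    rewrite !inE (Pt : P t) /=.
    apply/negPn/negP => nt; suff : t \in B by rewrite B0 !inE.
    by rewrite !inE (Pt : P t) nt.
  have [u uB u_min] := arg_minnP key u0B.
  move: (uB : u \in B); rewrite !inE -ltnNge => /andP[Pu lt_k].
  rewrite -ltnS; apply: leq_trans lt_k _.
  apply: leq_trans (_ : #|u |: Q| <= _)%nat.
    apply/subset_leq_card/fintype.subsetP => s; rewrite !inE => /andP[Ps ksu].
    have [//|su /=] := eqVneq s u; rewrite Ps; apply/negPn/negP => ns.
    have /u_min kus : s \in B by rewrite !inE Ps ns.
    by move: su; rewrite (key_inj (_ : key s = key u)) ?eqxx //; apply/eqP; rewrite eqn_leq ksu.
  by rewrite cardsU1 -add1n leq_add2r leq_b1.
by apply/eqP; rewrite eqn_leq le_k.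
Qed.

Lemma sum_rank_in_between (R : numDomainType) a b : (a <= #|P|)%nat -> (b <= #|P|)%nat ->
  \sum_(t | P t) ((rank_in t <= a)%nat != (rank_in t <= b)%nat)%:R = `|a%:R - b%:R| :> R.
Proof.
wlog ab : a b / (a <= b)%nat.
  move=> wl aP bP; case: (leqP a b) => [ab | /ltnW ba]; first exact: wl.
  by rewrite distrC -wl //; apply: eq_bigr => t _; rewrite eq_sym.
move=> aP bP; rewrite ler0_norm ?subr_le0 ?ler_nat // opprB.
have sum_le c : (c <= #|P|)%nat -> \sum_(t | P t) (rank_in t <= c)%nat%:R = c%:R :> R.
  by move=> cP; rewrite sum_indicator card_rank_in_le.
rewrite -(sum_le a) // -(sum_le b) // -sumrB; apply: eq_bigr => t _.
case: (leqP (rank_in t) a) => [ra | _]; first by rewrite (leq_trans ra ab) subrr.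
by rewrite subr0; case: (rank_in t <= b)%nat.
Qed.

End Rank.

Section CalibratedRounding.

Variables (T : nat) (x : 'I_T -> bool) (D : 'I_T -> R -> R) (U : seq R).
Hypothesis D_ge0 : forall t a, 0 <= D t a.
Hypothesis D_sum1 : forall t, \sum_(a <- U) D t a = 1.
Hypothesis D_calibrated :
  forall a, a \in U -> \sum_(t < T) ((x t)%:R - a) * D t a = 0.

Variables (M : nat) (v : nat -> R) (jp : 'I_T -> nat) (ja : R -> nat).
Hypothesis v_mono : forall l, (l < M)%nat -> v l <= v l.+1.
Hypothesis v_01 : forall l, (l <= M)%nat -> 0 <= v l <= 1.
Hypothesis jp_le : forall t, (jp t <= M)%nat.
Hypothesis ja_le : forall a, (ja a <= M)%nat.

Definition key (t : 'I_T) : nat := (jp t * T + t)%nat.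

Lemma key_inj : injective key.
Proof.
move=> s t eq_key; apply: val_inj.
by have := congr1 (modn^~ T) eq_key; rewrite /= !modnMDl !modn_small.
Qed.

Lemma key_lt s t : (jp s < jp t)%nat -> (key s < key t)%nat.
Proof. by move=> lt_st; rewrite /key; have := ltn_ord s; have := ltn_ord t; nia. Qed.

Definition class_rank (t : 'I_T) : nat := rank_in [pred s | x s == x t] key t.
Definition class_size (b : bool) : nat := #|[pred t | x t == b]|.
Definition count_below (b : bool) (l : nat) : nat :=
  #|[set t | (x t == b) && (jp t <= l)%nat]|.
Definition mass_below (b : bool) (l : nat) : R :=
  \sum_(t | x t == b) \sum_(a <- U) D t a * (ja a <= l)%nat%:R.
Definition quota (b : bool) (l : nat) : nat := Num.truncn (mass_below b l + 2^-1).
Definition bin (t : 'I_T) : nat := \sum_(0 <= j < M) (quota (x t) j < class_rank t)%nat.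

Lemma sum1_class b : \sum_(t | x t == b) 1 = (class_size b)%:R :> R.
Proof.
rewrite (eq_bigr (fun _ => true%:R)) // sum_indicator.
by congr _%:R; apply: eq_card => t; rewrite !inE andbT.
Qed.

Lemma mass_below_ge0 b l : 0 <= mass_below b l.
Proof. by do 2!apply: sumr_ge0 => ? _; rewrite mulr_ge0. Qed.

Lemma mass_below_mono b l l' : (l <= l')%nat -> mass_below b l <= mass_below b l'.
Proof.
move=> ll'; apply: ler_sum => t _; apply: ler_sum => a _; rewrite ler_wpM2l // ler_nat.
by case: (leqP (ja a) l) => [/leq_trans -> | _].
Qed.

Lemma mass_below_le b l : mass_below b l <= (class_size b)%:R.
Proof.
rewrite -sum1_class; apply: ler_sum => t _; rewrite -[leRHS](D_sum1 t).
apply: ler_sum => a _; by case: (ja a <= l)%nat; rewrite ?mulr1 ?mulr0 ?D_ge0.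
Qed.

Lemma mass_below_top b l : (M <= l)%nat -> mass_below b l = (class_size b)%:R.
Proof.
move=> Ml; rewrite -sum1_class; apply: eq_bigr => t _; rewrite -[RHS](D_sum1 t).
by apply: eq_bigr => a _; rewrite (leq_trans (ja_le a) Ml) mulr1.
Qed.

Lemma quota_le b l : (quota b l <= class_size b)%nat.
Proof. by rewrite /quota truncn_le_nat -[ltRHS]natr1; have := mass_below_le b l; lra. Qed.

Lemma quota_top b l : (M <= l)%nat -> quota b l = class_size b.
Proof.
move=> Ml; rewrite /quota mass_below_top //; apply: truncn_def.
by rewrite -[(class_size b).+1%:R]natr1; apply/andP; split; lra.
Qed.

Lemma quota_mono b l l' : (l <= l')%nat -> (quota b l <= quota b l')%nat.
Proof. by move=> ll'; apply: le_truncn; have := mass_below_mono b ll'; lra. Qed.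

Lemma dist_quota_mass b l : `|(quota b l)%:R - mass_below b l| <= 2^-1.
Proof.
have /truncn_itv : 0 <= mass_below b l + 2^-1 by have := mass_below_ge0 b l; lra.
by rewrite -[(quota b l).+1%:R]natr1 ler_norml => /andP[? ?]; apply/andP; split; lra.
Qed.

Lemma bin_le_M t : (bin t <= M)%nat.
Proof. exact: sum_nat_bool_le. Qed.

Lemma bin_leE t l : (bin t <= l)%nat = (class_rank t <= quota (x t) l)%nat.
Proof.
have [Ml | lM] := leqP M l.
  by rewrite (leq_trans (bin_le_M t) Ml) quota_top // rank_in_le_card.
have [le_rq | lt_qr] := leqP (class_rank t) (quota (x t) l).
  rewrite /bin (big_cat_nat (leq0n l) (ltnW lM)) /= [X in (_ + X)%nat]big_nat_cond.
  rewrite [X in (_ + X)%nat]big1 ?addn0 ?sum_nat_bool_le // => j /andP[/andP[lj _] _].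
  by rewrite ltnNge (leq_trans le_rq (quota_mono _ lj)).
apply/negbTE; rewrite -ltnNge /bin (big_cat_nat (leq0n l.+1) lM) /=.
apply: leq_trans (leq_addr _ _); rewrite (eq_big_nat _ _ (F2 := fun _ => 1%nat)).
  by rewrite sum_nat_const_nat muln1 subn0.
move=> j /andP[_ jl].
by rewrite (leq_ltn_trans (quota_mono _ (jl : (j <= l)%nat)) lt_qr).
Qed.

Lemma jp_leE t l : (jp t <= l)%nat = (class_rank t <= count_below (x t) l)%nat.
Proof.
have [le_tl | lt_lt] := leqP (jp t) l.
  apply/esym/subset_leq_card/fintype.subsetP => s; rewrite !inE => /andP[-> le_st] /=.
  apply: leq_trans le_tl; rewrite leqNgt; apply: contraTN le_st => /key_lt.
  by rewrite ltnNge.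
apply/esym/negbTE; rewrite -ltnNge /class_rank /rank_in.
apply: (@leq_trans #|t |: [set s | (x s == x t) && (jp s <= l)%nat]|).
  by rewrite cardsU1 !inE eqxx /= -ltnNge lt_lt.
apply/subset_leq_card/fintype.subsetP => s; rewrite !inE => /orP[/eqP -> | /andP[-> sl]].
  by rewrite eqxx leqnn.
by rewrite ltnW // key_lt // (leq_ltn_trans sl lt_lt).
Qed.

Lemma sum_bin_le b l : \sum_(t | x t == b) (bin t <= l)%nat%:R = (quota b l)%:R :> R.
Proof.
under eq_bigr => t /eqP xt do rewrite bin_leE /class_rank xt.
by rewrite sum_indicator card_rank_in_le ?quota_le //; apply: key_inj.
Qed.

Lemma count_below_le b l : (count_below b l <= class_size b)%nat.
Proof. by apply/subset_leq_card/fintype.subsetP => t; rewrite !inE => /andP[]. Qed.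

Lemma sum_class_cut_jp_bin b l :
  \sum_(t | x t == b) ((jp t <= l)%nat != (bin t <= l)%nat)%:R
  = `|(count_below b l)%:R - (quota b l)%:R| :> R.
Proof.
rewrite -(@sum_rank_in_between _ [pred t | x t == b] _ key_inj R) ?count_below_le ?quota_le //.
by apply: eq_bigr => t /eqP xt; rewrite jp_leE bin_leE /class_rank xt.
Qed.

Lemma dist_count_mass b l : `|(count_below b l)%:R - mass_below b l| <=
  \sum_(t | x t == b) \sum_(a <- U) D t a * ((jp t <= l)%nat != (ja a <= l)%nat)%:R.
Proof.
have -> : (count_below b l)%:R - mass_below b l =
    \sum_(t | x t == b) \sum_(a <- U) D t a * ((jp t <= l)%nat%:R - (ja a <= l)%nat%:R).
  rewrite -sum_indicator -sumrB; apply: eq_bigr => t _.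
  rewrite -[X in X - _]mul1r -[X in X * _ - _](D_sum1 t) mulr_suml -sumrB.
  by apply: eq_bigr => a _; rewrite mulrBr.
apply: le_trans (ler_norm_sum _ _ _) _; apply: ler_sum => t _.
apply: le_trans (ler_norm_sum _ _ _) _; apply: ler_sum => a _.
by rewrite normrM natr_bool_dist ger0_norm.
Qed.

(* Both classes round their mass to a quota within 1/2, hence the +1. *)
Lemma sum_cut_jp_bin l :
  \sum_t ((jp t <= l)%nat != (bin t <= l)%nat)%:R <=
  \sum_t \sum_(a <- U) D t a * ((jp t <= l)%nat != (ja a <= l)%nat)%:R + 1.
Proof.
rewrite (sum_bool_split x) [X in _ <= X + _](sum_bool_split x) !sum_class_cut_jp_bin.
have c1 := dist_count_mass true l; have c0 := dist_count_mass false l.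
have q1 := dist_quota_mass true l; have q0 := dist_quota_mass false l.
have t1 := ler_distD (mass_below true l) (count_below true l)%:R (quota true l)%:R.
have t0 := ler_distD (mass_below false l) (count_below false l)%:R (quota false l)%:R.
rewrite distrC in q1; rewrite distrC in q0; lra.
Qed.

Lemma sum_dist_jp_bin :
  \sum_t `|v (jp t) - v (bin t)| <=
  \sum_t \sum_(a <- U) D t a * `|v (jp t) - v (ja a)| + 1.
Proof.
pose cut i j l : R := ((i <= l)%nat != (j <= l)%nat)%:R.
pose incr l := v l.+1 - v l.
have layer i j : (i <= M)%nat -> (j <= M)%nat ->
    `|v i - v j| = \sum_(l < M) incr l * cut i j l by exact: dist_layer_cake.
have incr_ge0 (l : 'I_M) : 0 <= incr l by rewrite subr_ge0 v_mono.
have incr_sum : \sum_(l < M) incr l <= 1.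
  have := telescope_from v (leq0n M); under eq_bigr do rewrite mulr1.
  by move=> ->; have := v_01 (leqnn M); have := v_01 (leq0n M); lra.
have -> : \sum_t `|v (jp t) - v (bin t)| =
    \sum_(l < M) incr l * \sum_t cut (jp t) (bin t) l.
  under eq_bigr => t _ do rewrite layer ?bin_le_M //.
  by rewrite exchange_big; apply: eq_bigr => l _; rewrite mulr_sumr.
have -> : \sum_t \sum_(a <- U) D t a * `|v (jp t) - v (ja a)| =
    \sum_(l < M) incr l * \sum_t \sum_(a <- U) D t a * cut (jp t) (ja a) l.
  under eq_bigr => t _ do under eq_bigr => a _ do rewrite layer // mulr_sumr.
  under eq_bigr => t _ do rewrite exchange_big /=.
  rewrite exchange_big; apply: eq_bigr => l _; rewrite mulr_sumr; apply: eq_bigr => t _.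
  by rewrite mulr_sumr; apply: eq_bigr => a _; rewrite mulrCA.
apply: le_trans (_ : \sum_(l < M) incr l *
    (\sum_t \sum_(a <- U) D t a * cut (jp t) (ja a) l + 1) <= _).
  by apply: ler_sum => l _; rewrite ler_wpM2l //; exact: sum_cut_jp_bin.
by under eq_bigr do rewrite mulrDr mulr1; rewrite big_split lerD2l.
Qed.

Definition bin_count (b : bool) (j : nat) : R :=
  \sum_(t | x t == b) (bin t == j)%:R.
Definition bin_size (j : nat) := bin_count true j + bin_count false j.
Definition bin_freq (j : nat) := bin_count true j / bin_size j.
Definition bin_mass (b : bool) (j : nat) : R :=
  \sum_(t | x t == b) \sum_(a <- U) D t a * (ja a == j)%:R.

Lemma dist_bin_count_mass b j : `|bin_count b j - bin_mass b j| <= 1.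
Proof.
case: j => [|j].
  have -> : bin_count b 0 = (quota b 0)%:R.
    by rewrite -sum_bin_le; apply: eq_bigr => t _; rewrite leqn0.
  have -> : bin_mass b 0 = mass_below b 0.
    by apply: eq_bigr => t _; apply: eq_bigr => a _; rewrite leqn0.
  by have := dist_quota_mass b 0; lra.
have -> : bin_count b j.+1 = (quota b j.+1)%:R - (quota b j)%:R.
  by rewrite -!sum_bin_le -sumrB; apply: eq_bigr => t _; apply: eqn_indicator.
have -> : bin_mass b j.+1 = mass_below b j.+1 - mass_below b j.
  rewrite -sumrB; apply: eq_bigr => t _; rewrite -sumrB.
  by apply: eq_bigr => a _; rewrite -mulrBr eqn_indicator.
have q1 := dist_quota_mass b j.+1; have q0 := dist_quota_mass b j.
rewrite (_ : _ - _ = ((quota b j.+1)%:R - mass_below b j.+1)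
                     - ((quota b j)%:R - mass_below b j)); last by lra.
by apply: le_trans (ler_normB _ _) _; lra.
Qed.

Lemma sum_class_bin b (F : nat -> R) :
  \sum_(t | x t == b) F (bin t) = \sum_(j < M.+1) bin_count b j * F j.
Proof.
under [RHS]eq_bigr do rewrite mulr_suml.
rewrite exchange_big; apply: eq_bigr => t _.
by rewrite sum_ord_indicator ?bin_le_M.
Qed.

Lemma sum_bin (F : nat -> R) : \sum_t F (bin t) = \sum_(j < M.+1) bin_size j * F j.
Proof.
rewrite (sum_bool_split x) !sum_class_bin -big_split.
by apply: eq_bigr => j _; rewrite mulrDl.
Qed.

Lemma sum_x_bin (F : nat -> R) :
  \sum_t (x t)%:R * F (bin t) = \sum_(j < M.+1) bin_count true j * F j.
Proof.
rewrite (sum_bool_split x) -sum_class_bin [X in _ + X]big1 ?addr0.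
  by apply: eq_bigr => t /eqP ->; rewrite mul1r.
by move=> t /eqP ->; rewrite mul0r.
Qed.

Lemma bin_count_ge0 b j : 0 <= bin_count b j.
Proof. by apply: sumr_ge0 => t _; rewrite ler0n. Qed.

Lemma bin_size_freq j : bin_size j * bin_freq j = bin_count true j.
Proof.
have c1 := bin_count_ge0 true j; have c0 := bin_count_ge0 false j.
have [size0 | size_neq0] := eqVneq (bin_size j) 0; last by rewrite mulrC divfK.
by rewrite size0 mul0r; move: size0; rewrite /bin_size => sum0; lra.
Qed.

Lemma bin_freq_01 j : 0 <= bin_freq j <= 1.
Proof.
have c1 := bin_count_ge0 true j; have c0 := bin_count_ge0 false j.
have [size0 | size_neq0] := eqVneq (bin_size j) 0.
  by rewrite /bin_freq size0 invr0 mulr0 lexx ler01.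
have size_gt0 : 0 < bin_size j by rewrite lt0r size_neq0 /bin_size; lra.
apply/andP; split; first exact: divr_ge0 c1 (ltW size_gt0).
by rewrite ler_pdivrMr // mul1r lerDl.
Qed.

Lemma bin_freq_calibrated : perfectly_calibrated x (fun t => bin_freq (bin t)).
Proof.
split=> [t | alpha]; first exact: bin_freq_01.
under eq_bigr do rewrite mulrBl.
rewrite sumrB (sum_x_bin (fun j => (bin_freq j == alpha)%:R)).
rewrite (sum_bin (fun j => bin_freq j * (bin_freq j == alpha)%:R)) -sumrB.
by rewrite big1 // => j _; rewrite mulrA bin_size_freq subrr.
Qed.

(* The calibration of D is used only here. *)
Lemma bin_mass_residual j :
  (bin_mass true j + bin_mass false j) * v j - bin_mass true j =
  \sum_t \sum_(a <- U) D t a * (ja a == j)%:R * (v j - a).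
Proof.
have mass_all : bin_mass true j + bin_mass false j =
    \sum_t \sum_(a <- U) D t a * (ja a == j)%:R by rewrite [RHS](sum_bool_split x).
have mass_x : bin_mass true j =
    \sum_t (x t)%:R * \sum_(a <- U) D t a * (ja a == j)%:R.
  rewrite (sum_bool_split x) [X in _ = _ + X]big1 ?addr0 => [|t /eqP ->].
    by apply: eq_bigr => t /eqP ->; rewrite mul1r.
  by rewrite mul0r.
rewrite mass_all mass_x mulr_suml -sumrB.
under eq_bigr do rewrite mulr_suml mulr_sumr -sumrB.
rewrite exchange_big [RHS]exchange_big /= big_seq [RHS]big_seq.
apply: eq_bigr => a aU; apply/eqP; rewrite -subr_eq0 -sumrB.
rewrite (eq_bigr (fun t => - (ja a == j)%:R * (((x t)%:R - a) * D t a))) => [|t _].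
  by rewrite -mulr_sumr D_calibrated // mulr0.
by lra.
Qed.

Lemma dist_bin_size_count j : (j <= M)%nat ->
  `|bin_size j * v j - bin_count true j| <=
  3 + \sum_t \sum_(a <- U) D t a * (ja a == j)%:R * `|v j - a|.
Proof.
move=> jM; have /andP[v0 v1] := v_01 jM.
have c1 := dist_bin_count_mass true j; have c0 := dist_bin_count_mass false j.
have residual : `|(bin_mass true j + bin_mass false j) * v j - bin_mass true j| <=
    \sum_t \sum_(a <- U) D t a * (ja a == j)%:R * `|v j - a|.
  rewrite bin_mass_residual; apply: le_trans (ler_norm_sum _ _ _) _; apply: ler_sum => t _.
  apply: le_trans (ler_norm_sum _ _ _) _; apply: ler_sum => a _.
  by rewrite !normrM ger0_norm // normr_nat.
have size_err : `|(bin_size j - (bin_mass true j + bin_mass false j)) * v j| <= 2.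
  rewrite normrM (ger0_norm v0); apply: le_trans (ler_piMr (normr_ge0 _) v1) _.
  rewrite (_ : _ - _ = (bin_count true j - bin_mass true j)
                       + (bin_count false j - bin_mass false j)); last first.
    by rewrite /bin_size; lra.
  by apply: le_trans (ler_normD _ _) _; lra.
rewrite (_ : _ - _ = (bin_size j - (bin_mass true j + bin_mass false j)) * v j
    + ((bin_mass true j + bin_mass false j) * v j - bin_mass true j)
    + (bin_mass true j - bin_count true j)); last by rewrite /bin_size; lra.
apply: le_trans (ler_normD _ _) _; apply: le_trans (lerD (ler_normD _ _) (lexx _)) _.
by rewrite distrC in c1; lra.
Qed.

Lemma sum_dist_bin_freq :
  \sum_t `|v (bin t) - bin_freq (bin t)| <=
  (3 * M.+1)%:R + \sum_t \sum_(a <- U) D t a * `|v (ja a) - a|.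
Proof.
have regroup : \sum_(j < M.+1) \sum_t \sum_(a <- U) D t a * (ja a == j)%:R * `|v j - a|
    = \sum_t \sum_(a <- U) D t a * `|v (ja a) - a|.
  rewrite exchange_big; apply: eq_bigr => t _; rewrite exchange_big; apply: eq_bigr => a _.
  rewrite -(sum_ord_indicator (fun j => D t a * `|v j - a|) (ja_le a)).
  by apply: eq_bigr => j _; rewrite -mulrA mulrCA.
have size_ge0 j : 0 <= bin_size j by apply: addr_ge0; apply: bin_count_ge0.
rewrite (sum_bin (fun j => `|v j - bin_freq j|)).
under eq_bigr do rewrite -[X in X * _](ger0_norm (size_ge0 _)) -normrM mulrBr bin_size_freq.
apply: le_trans (ler_sum _ (fun (j : 'I_M.+1) _ => dist_bin_size_count (ltnSE (ltn_ord j)))) _.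
by rewrite big_split /= regroup sumr_const card_ord lerD2r natrM mulr_natr.
Qed.

Lemma exists_calibrated_near_grid : exists2 q, perfectly_calibrated x q &
  \sum_t `|v (jp t) - q t| <=
  \sum_t \sum_(a <- U) D t a * (`|v (jp t) - v (ja a)| + `|v (ja a) - a|)
  + (3 * M + 4)%:R.
Proof.
exists (fun t => bin_freq (bin t)); first exact: bin_freq_calibrated.
apply: le_trans (_ : \sum_t (`|v (jp t) - v (bin t)| + `|v (bin t) - bin_freq (bin t)|) <= _).
  by apply: ler_sum => t _; apply: ler_distD.
under [X in _ <= X + _]eq_bigr do under eq_bigr do rewrite mulrDr.
under [X in _ <= X + _]eq_bigr do rewrite big_split /=.
rewrite !big_split /=.
have := sum_dist_jp_bin; have := sum_dist_bin_freq.
rewrite (_ : (3 * M + 4)%nat = (1 + 3 * M.+1)%nat) ?natrD //; last by lia.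
lra.
Qed.

End CalibratedRounding.

Lemma CalDist_le_l1dist T (x : 'I_T -> bool) (p q : 'I_T -> R) :
  perfectly_calibrated x q -> CalDist x p <= l1dist p q.
Proof.
move=> qx; apply: ge_inf; last by exists q.
by exists 0 => _ [q' [_ ->]]; apply: sumr_ge0.
Qed.

Lemma l1dist_dist_ge0 T (x : 'I_T -> bool) (p : 'I_T -> R) D S :
  lower_calibrated x D S -> 0 <= l1dist_dist p D S.
Proof.
move=> [dist _]; apply: sumr_ge0 => t _; apply: sumr_ge0 => a _.
by have [_ _ D_ge0 _ _] := dist t; rewrite mulr_ge0.
Qed.

(* The point mass at the mean outcome, forecast in every round. *)
Lemma lower_calibrated_mean T (x : 'I_T -> bool) : (0 < T)%nat ->
  exists D S, lower_calibrated x D S.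
Proof.
move=> T0; pose mean : R := (\sum_t (x t)%:R) / T%:R.
have T_gt0 : 0 < T%:R :> R by rewrite ltr0n.
have sum_x_le : \sum_(t < T) (x t)%:R <= T%:R :> R.
  apply: le_trans (_ : \sum_(t < T) 1 <= _); last by rewrite sumr_const card_ord.
  by apply: ler_sum => t _; case: (x t).
exists (fun _ a => (a == mean)%:R), (fun _ => [:: mean]); split => [t | alpha].
  split=> [ | a | a | a | ] //; rewrite ?inE.
  - move=> /eqP ->; rewrite /mean ler_pdivrMr // mul1r sum_x_le andbT.
    by rewrite divr_ge0 ?sumr_ge0 ?ltW.
  - by case: (a == mean); rewrite /= ?eqxx.
  - by rewrite big_seq1 eqxx.
have [-> | ne] := eqVneq alpha mean; last first.
  by rewrite big1 // => t _; rewrite mulr0.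
under eq_bigr do rewrite mulr1.
by rewrite sumrB sumr_const card_ord -mulr_natr divfK ?subrr // gt_eqF.
Qed.

Lemma CalDist_le_LowerCalDist T (x : 'I_T -> bool) (p : 'I_T -> R) (c e : R) :
  (0 < T)%nat -> 0 < c ->
  (forall D S, lower_calibrated x D S -> CalDist x p <= c * l1dist_dist p D S + e) ->
  CalDist x p <= c * LowerCalDist x p + e.
Proof.
move=> T0 c0 bound.
suff : (CalDist x p - e) / c <= LowerCalDist x p by rewrite ler_pdivrMr // => ?; lra.
apply: lb_le_inf => [|_ [D [S [DS ->]]]]; last first.
  by rewrite ler_pdivrMr //; have := bound D S DS; lra.
by have [D [S DS]] := lower_calibrated_mean x T0; exists (l1dist_dist p D S), D, S.
Qed.

Definition support_union T (S : 'I_T -> seq R) : seq R :=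
  undup (flatten [seq S t | t <- enum 'I_T]).

Lemma sum_support_union T (x : 'I_T -> bool) D S (f : R -> R) t :
  lower_calibrated x D S ->
  \sum_(a <- S t) D t a * f a = \sum_(a <- support_union S) D t a * f a.
Proof.
move=> [dist _]; have [uniq_S _ _ D_supp _] := dist t.
apply: sum_uniq_support; rewrite ?undup_uniq //.
  by move=> a aS; rewrite mem_undup; apply/flatten_mapP; exists t; rewrite ?mem_enum.
by move=> a; rewrite mulf_eq0 negb_or => /andP[/D_supp].
Qed.

Lemma CalDist_le_grid_rounding T (x : 'I_T -> bool) (p : 'I_T -> R) D S
    M (v : nat -> R) (jp : 'I_T -> nat) (ja : R -> nat) (c d e : R) :
  lower_calibrated x D S ->
  (forall l, (l < M)%nat -> v l <= v l.+1) -> (forall l, (l <= M)%nat -> 0 <= v l <= 1) ->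
  (forall t, (jp t <= M)%nat) -> (forall a, (ja a <= M)%nat) ->
  (forall t, `|p t - v (jp t)| <= d) ->
  (forall t a, a \in S t ->
     `|v (jp t) - v (ja a)| + `|v (ja a) - a| <= c * `|p t - a| + e) ->
  CalDist x p <= c * l1dist_dist p D S + T%:R * (d + e) + (3 * M + 4)%:R.
Proof.
move=> DS v_mono v_01 jp_le ja_le near_p near_a; have [dist cal] := DS.
have D_ge0 t a : 0 <= D t a by have [] := dist t.
have D_sum1 t : \sum_(a <- S t) D t a = 1 by have [] := dist t.
have D_sum1U t : \sum_(a <- support_union S) D t a = 1.
  have := sum_support_union (fun=> 1) t DS.
  by rewrite !(eq_bigr _ (fun a _ => mulr1 (D t a))) D_sum1 => <-.
have [q qx near_q] := exists_calibrated_near_grid D_ge0 D_sum1U (fun a _ => cal a)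
  v_mono v_01 jp_le ja_le.
have sum_near_p : \sum_t `|p t - v (jp t)| <= T%:R * d.
  apply: le_trans (ler_sum _ (fun t _ => near_p t)) _.
  by rewrite sumr_const card_ord mulr_natl.
have cost : \sum_t \sum_(a <- support_union S) D t a *
    (`|v (jp t) - v (ja a)| + `|v (ja a) - a|) <= c * l1dist_dist p D S + T%:R * e.
  apply: le_trans (_ : \sum_t (c * \sum_(a <- S t) D t a * `|p t - a| + e) <= _); last first.
    by rewrite big_split /= -mulr_sumr sumr_const card_ord mulr_natl.
  apply: ler_sum => t _.
  rewrite -(sum_support_union (fun a => `|v (jp t) - v (ja a)| + `|v (ja a) - a|) t DS).
  rewrite -[X in _ <= _ + X]mul1r -(D_sum1 t) mulr_suml mulr_sumr -big_split /=.
  rewrite big_seq [X in _ <= X]big_seq; apply: ler_sum => a aS.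
  by rewrite mulrCA -mulrDr ler_wpM2l // near_a.
apply: le_trans (CalDist_le_l1dist p qx) _.
apply: le_trans (_ : \sum_t `|p t - v (jp t)| + \sum_t `|v (jp t) - q t| <= _).
  by rewrite -big_split; apply: ler_sum => t _; apply: ler_distD.
lra.
Qed.

Definition floor_index (K : nat) (y : R) : nat := minn (Num.truncn (y * K%:R)) K.

Lemma floor_index_approx K y : (0 < K)%nat -> 0 <= y <= 1 ->
  `|y - (floor_index K y)%:R / K%:R| <= K%:R^-1.
Proof.
move=> K_gt0 /andP[y0 y1]; have K0 : 0 < K%:R :> R by rewrite ltr0n.
have yK0 : 0 <= y * K%:R by rewrite mulr_ge0 ?ler0n.
have /andP[lo hi] := truncn_itv yK0; rewrite -[_.+1%:R]natr1 in hi.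
have trunc_le : (Num.truncn (y * K%:R) <= K)%nat.
  have : y * K%:R <= K%:R by rewrite ler_piMl ?ler0n.
  by rewrite truncn_le_nat -[K.+1%:R]natr1; lra.
rewrite /floor_index (minn_idPl trunc_le).
rewrite -[y in y - _](mulfK (lt0r_neq0 K0)) -mulrBl normrM.
rewrite [`|_^-1|]ger0_norm ?invr_ge0 ?ler0n // ler_piMl ?invr_ge0 ?ler0n //.
by rewrite ler_norml; apply/andP; split; lra.
Qed.

Lemma sqrt_mesh_bound (T K : nat) : (0 < T)%nat ->
  Num.sqrt (T%:R : R) < K%:R <= Num.sqrt (T%:R : R) + 1 ->
  T%:R * (K%:R^-1 + 3 * K%:R^-1) + (3 * K + 4)%:R <= 14 * Num.sqrt T%:R :> R.
Proof.
move=> T0 /andP[lo hi]; set r := Num.sqrt T%:R in lo hi *.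
have r1 : 1 <= r by rewrite -sqrtr1 ler_wsqrtr // ler1n.
have rr : r * r = T%:R by rewrite -expr2 sqr_sqrtr // ler0n.
have K0 : 0 < K%:R :> R by lra.
have TK : T%:R * K%:R^-1 <= r by rewrite ler_pdivrMr // -rr; apply: ler_wpM2l; lra.
by rewrite natrD natrM; lra.
Qed.

Lemma CalDist_le_sqrt T (x : 'I_T -> bool) (p : 'I_T -> R) D S : (0 < T)%nat ->
  (forall t, 0 <= p t <= 1) -> lower_calibrated x D S ->
  CalDist x p <= l1dist_dist p D S + 14 * Num.sqrt T%:R.
Proof.
move=> T0 p01 DS; pose K := (Num.truncn (Num.sqrt (T%:R : R))).+1.
have K0 : 0 < K%:R :> R by rewrite ltr0n.
pose grid l : R := l%:R / K%:R.
have near y : 0 <= y <= 1 -> `|y - grid (floor_index K y)| <= K%:R^-1.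
  exact: floor_index_approx.
have a01 t a : a \in S t -> 0 <= a <= 1.
  by have [dist _] := DS; have [_ S01 _ _ _] := dist t; apply: S01.
apply: le_trans (CalDist_le_grid_rounding (c := 1) (d := K%:R^-1) (e := 3 * K%:R^-1) (M := K)
  (v := grid) (jp := fun t => floor_index K (p t)) (ja := floor_index K) DS _ _ _ _ _ _) _.
- by move=> l _; rewrite ler_wpM2r ?invr_ge0 ?ler0n ?ler_nat.
- move=> l lK; rewrite divr_ge0 ?ler0n ?invr_ge0 ?ler0n //=.
  by rewrite ler_pdivrMr // mul1r ler_nat.
- by move=> t; apply: geq_minr.
- by move=> a; apply: geq_minr.
- by move=> t; apply: near.
- move=> t a aS; apply: le_trans (_ : _ <= `|p t - a| + 3 * K%:R^-1) _; last first.
    by rewrite mul1r lexx.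
  have := near _ (p01 t); have := near _ (a01 t a aS).
  have := ler_distD (p t) (grid (floor_index K (p t))) (grid (floor_index K a)).
  have := ler_distD a (p t) (grid (floor_index K a)).
  rewrite (distrC (grid (floor_index K (p t))) (p t)) (distrC (grid (floor_index K a)) a).
  lra.
rewrite mul1r -addrA lerD2l; apply: sqrt_mesh_bound => //.
have /andP[lo hi] := truncn_itv (sqrtr_ge0 (T%:R : R)).
apply/andP; split; first exact: hi.
by rewrite /K -natr1 lerD2r.
Qed.

Definition nearest_index (M : nat) (v : nat -> R) (a : R) : nat :=
  [arg min_(j < (ord0 : 'I_M.+1)) `|v j - a|]%O.

Lemma nearest_index_le M v a : (nearest_index M v a <= M)%nat.
Proof. by rewrite /nearest_index -ltnS ltn_ord. Qed.

Lemma nearest_index_min M v a j : (j <= M)%nat ->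
  `|v (nearest_index M v a) - a| <= `|v j - a|.
Proof.
move=> jM; rewrite /nearest_index; case: arg_minP => // i _ min_i.
exact: (min_i (Ordinal (jM : j < M.+1)%nat)).
Qed.

Lemma CalDist_le_distinct T (x : 'I_T -> bool) (p : 'I_T -> R) D S : (0 < T)%nat ->
  (forall t, 0 <= p t <= 1) -> lower_calibrated x D S ->
  CalDist x p <= 3 * l1dist_dist p D S + 4 * (num_distinct p)%:R.
Proof.
move=> T0 p01 DS; pose s := sort <=%R (undup [seq p t | t <- enum 'I_T]).
have mem_s a : (a \in s) = (a \in [seq p t | t <- enum 'I_T]) by rewrite mem_sort mem_undup.
pose M := (size s).-1.
have size_s : size s = M.+1.
  rewrite prednK // -has_predT; apply/hasP; exists (p (Ordinal T0)) => //.
  by rewrite mem_s map_f ?mem_enum.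
pose grid l := nth 0 s l.
have grid_p t : grid (index (p t) s) = p t by rewrite /grid nth_index // mem_s map_f ?mem_enum.
have jp_le t : (index (p t) s <= M)%nat.
  by rewrite -ltnS -size_s index_mem mem_s map_f ?mem_enum.
apply: le_trans (CalDist_le_grid_rounding (c := 3) (d := 0) (e := 0) (M := M)
  (v := grid) (jp := fun t => index (p t) s) (ja := nearest_index M grid) DS _ _ _ _ _ _) _.
- move=> l lM; apply: le_sorted_leq_nth; rewrite ?inE ?size_s ?ltnS ?leqnSn //.
    by apply: sort_sorted; apply: le_total.
  exact: ltnW.
- move=> l lM; have : grid l \in s by rewrite mem_nth ?size_s.
  by rewrite mem_s => /mapP[t _ ->].
- exact: jp_le.
- by move=> a; apply: nearest_index_le.
- by move=> t; rewrite grid_p subrr normr0.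
- move=> t a _; apply: le_trans (_ : _ <= 3 * `|p t - a|) _; last by rewrite addr0 lexx.
  have := nearest_index_min grid a (jp_le t); rewrite grid_p.
  have := ler_distD a (p t) (grid (nearest_index M grid a)).
  rewrite (distrC a); lra.
have -> : num_distinct p = M.+1 by rewrite -size_s size_sort.
rewrite addr0 mulr0 addr0 lerD2l natrD natrM -[M.+1%:R]natr1.
by have := ler0n R M; lra.
Qed.

Theorem theorem2 :
  exists C : R, 0 < C /\
    forall (T : nat) (x : 'I_T -> bool) (p : 'I_T -> R),
      (0 < T)%nat -> (forall t, 0 <= p t <= 1) ->
      CalDist x p <= LowerCalDist x p + C * Num.sqrt (T%:R) /\
      CalDist x p <= C * LowerCalDist x p + C * (num_distinct p)%:R.
Proof.
exists 14; split=> // T x p T0 p01; split.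
  rewrite -[LowerCalDist x p]mul1r; apply: CalDist_le_LowerCalDist => // D S DS.
  by rewrite mul1r; apply: CalDist_le_sqrt.
apply: CalDist_le_LowerCalDist => // D S DS.
have := CalDist_le_distinct T0 p01 DS; have := l1dist_dist_ge0 p DS.
by have := ler0n R (num_distinct p); lra.
Qed.
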